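(* Let $\mu_1>\mu_2\ge\dots\ge\mu_K$ and $\sigma_1,\dots,\sigma_K>0$, and let $w^*=\arg\max_{w\in\mathcal{W}}\min_{a\neq1}\frac{(\mu_1-\mu_a)^2}{2(\sigma_1^2/w_1+\sigma_a^2/w_a)}$. For $a\ge2$ define $\psi_a(y)=\frac{(\mu_1-\mu_a)^2-2y\sigma_1^2}{2\sigma_a^2y}$. Then \[ w_1^*=\frac{1}{1+\sum_{i\ge2}1/\psi_i(y^* )},\qquad w_a^*=\frac{1/\psi_a(y^* )}{1+\sum_{i\ge2}1/\psi_i(y^* )}\quad(a\ge2), \] where $y^*$ is the unique solution of $\sum_{a\ge2}\frac{\sigma_1^2}{\sigma_a^2\psi_a(y)^2}=1$. Moreover, $F(y)=\sum_{a\ge2}\frac{\sigma_1^2}{\sigma_a^2\psi_a(y)^2}$, defined on $(0,(\mu_1-\mu_2)^2/(2\sigma_1^2)]$, is strictly increasing with $\lim_{y\to0}F(y)=0$ and $\lim_{y\to(\mu_1-\mu_2)^2/(2\sigma_1^2)}F(y)=\infty$.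
   Context: $K\ge2$; $\mathcal{W}=\{w\in\mathbb{R}_+^K:\sum_{a=1}^Kw_a=1\}$ is the probability simplex. *)

(* Arms are indexed 1..K by nat, as in the paper. *)
From HB Require Import structures.
From mathcomp Require Import all_boot all_order all_algebra.
From mathcomp Require Import all_classical all_reals all_analysis.
Set Implicit Arguments. Unset Strict Implicit. Unset Printing Implicit Defensive.
Import Order.TTheory GRing.Theory Num.Theory.
Import numFieldNormedType.Exports.
Local Open Scope ring_scope.

Section Defs.
Variable R : realType.

Definition in_simplex (K : nat) (w : nat -> R) : Prop :=
  (forall a, (1 <= a <= K)%N -> 0 <= w a) /\ \sum_(1 <= a < K.+1) w a = 1.

(* (mu_1 - mu_a)^2 / (2 (sigma_1^2/w_1 + sigma_a^2/w_a)), extended by its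
   natural value 0 when w_1 = 0 or w_a = 0 (the denominator is +oo there). *)
Definition gterm (mu sig w : nat -> R) (a : nat) : R :=
  if (0 < w 1) && (0 < w a) then
    (mu 1 - mu a) ^+ 2 / (2 * (sig 1 ^+ 2 / w 1 + sig a ^+ 2 / w a))
  else 0.

Definition gobj (K : nat) (mu sig w : nat -> R) : R :=
  \big[Num.min/gterm mu sig w 2]_(2 <= a < K.+1) gterm mu sig w a.

Definition is_argmax (K : nat) (mu sig w : nat -> R) : Prop :=
  in_simplex K w /\ forall w', in_simplex K w' -> gobj K mu sig w' <= gobj K mu sig w.

Definition psi (mu sig : nat -> R) (a : nat) (y : R) : R :=
  ((mu 1 - mu a) ^+ 2 - 2 * y * sig 1 ^+ 2) / (2 * sig a ^+ 2 * y).

Definition Ffun (K : nat) (mu sig : nat -> R) (y : R) : R :=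
  \sum_(2 <= a < K.+1) sig 1 ^+ 2 / (sig a ^+ 2 * psi mu sig a y ^+ 2).

Definition ymax (mu sig : nat -> R) : R := (mu 1 - mu 2) ^+ 2 / (2 * sig 1 ^+ 2).

End Defs.

From Pilot Require Import Defs.
From HB Require Import structures.
From mathcomp Require Import all_boot all_order all_algebra.
From mathcomp Require Import all_classical all_reals all_analysis.
From mathcomp Require Import lra ring zify.
Import Order.TTheory GRing.Theory Num.Theory.
Import numFieldNormedType.Exports.
Local Open Scope classical_set_scope.
Local Open Scope ring_scope.

(* On (0, ymax) every psi_a is positive and strictly decreasing, so F is
   strictly increasing; F is continuous at 0 with F 0 = 0 (psi_a 0 is a division
   by zero, hence 0), and its a = 2 term blows up at ymax because psi_2 vanishes
   there, so F = 1 has exactly one root ys by the intermediate value theorem.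

   Since (mu_1 - mu_a)^2 = 2 y (sigma_1^2 + sigma_a^2 psi_a y), the closed-form
   allocation v of the statement equalises all the terms of the min at ys / S,
   where S = 1 + sum_a 1 / psi_a ys.  Conversely, if every term at w is at least
   ys / S, then sigma_1^2 / w_1 + sigma_a^2 / w_a is at most its value at v for
   every a.  Bound sigma_1^2 / w_1 from below by its tangent at v_1 and add up
   these inequalities with weights v_a^2 / sigma_a^2: the weights sum to
   F ys = 1, so the first-order terms cancel against sum_a (w_a - v_a) =
   v_1 - w_1, leaving sum_a (w_a - v_a)^2 / w_a <= 0.  Hence w = v, which is
   therefore the unique maximiser. *)

Section inverse_costs.
Variable R : realFieldType.

Lemma inv_tangent_le {b x v : R} : 0 < b -> 0 < x -> 0 < v ->
  b / v - b / v ^+ 2 * (x - v) <= b / x.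
Proof.
move=> b_gt0 x_gt0 v_gt0; rewrite -subr_ge0.
have -> : b / x - (b / v - b / v ^+ 2 * (x - v)) = b * (x - v) ^+ 2 / (x * v ^+ 2).
  by field; rewrite !gt_eqF.
by apply: divr_ge0; apply: mulr_ge0; rewrite ?sqr_ge0 // ltW.
Qed.

Lemma inv_costs_le_tangent (s1 s w1 w v1 v : R) :
  0 < s1 -> 0 < s -> 0 < w1 -> 0 < w -> 0 < v1 -> 0 < v ->
  s1 / w1 + s / w <= s1 / v1 + s / v ->
  (w - v) ^+ 2 / w + (v - w) <= s1 * v ^+ 2 / (s * v1 ^+ 2) * (w1 - v1).
Proof.
move=> s1_gt0 s_gt0 w1_gt0 w_gt0 v1_gt0 v_gt0 cost_le.
have := inv_tangent_le s1_gt0 w1_gt0 v1_gt0.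
have -> : (w - v) ^+ 2 / w + (v - w) = v ^+ 2 / s * (s / w - s / v).
  by field; rewrite !gt_eqF.
have -> : s1 * v ^+ 2 / (s * v1 ^+ 2) * (w1 - v1) = v ^+ 2 / s * (s1 / v1 ^+ 2 * (w1 - v1)).
  by field; rewrite !gt_eqF.
move=> tangent; rewrite ler_pM2l ?divr_gt0 ?exprn_gt0 //; lra.
Qed.

Lemma inv_costs_le_eq (I : eqType) (r : seq I) (s w v : I -> R) (s1 w1 v1 : R) :
  0 < s1 -> 0 < w1 -> 0 < v1 ->
  (forall a, a \in r -> [/\ 0 < s a, 0 < w a & 0 < v a]) ->
  \sum_(a <- r) s1 * v a ^+ 2 / (s a * v1 ^+ 2) = 1 ->
  w1 + \sum_(a <- r) w a = v1 + \sum_(a <- r) v a ->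
  (forall a, a \in r -> s1 / w1 + s a / w a <= s1 / v1 + s a / v a) ->
  w1 = v1 /\ {in r, w =1 v}.
Proof.
move=> s1_gt0 w1_gt0 v1_gt0 pos weights_sum mass cost_le.
have ratio_ge0 a : a \in r -> 0 <= (w a - v a) ^+ 2 / w a.
  by case/pos=> _ w_gt0 _; rewrite divr_ge0 ?sqr_ge0 // ltW.
have sum_sqr_le0 : \sum_(a <- r) (w a - v a) ^+ 2 / w a <= 0.
  have : \sum_(a <- r) ((w a - v a) ^+ 2 / w a + (v a - w a)) <=
         \sum_(a <- r) s1 * v a ^+ 2 / (s a * v1 ^+ 2) * (w1 - v1).
    rewrite big_seq_cond [leRHS]big_seq_cond; apply: ler_sum => a /andP[ra _].
    by have [? ? ?] := pos a ra; apply: inv_costs_le_tangent; last exact: cost_le.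
  rewrite big_split /= sumrB -mulr_suml weights_sum; lra.
have /allP sqr_eq0 : all (fun a => (a \in r) ==> ((w a - v a) ^+ 2 / w a == 0)) r.
  by rewrite -psumr_eq0 // -big_seq eq_le sum_sqr_le0 big_seq sumr_ge0.
have wv a : a \in r -> w a = v a.
  move=> ra; have [_ w_gt0 _] := pos a ra; move: (sqr_eq0 a ra); rewrite ra /=.
  by rewrite mulf_eq0 invr_eq0 (gt_eqF w_gt0) orbF sqrf_eq0 subr_eq0 => /eqP.
split=> //; move: mass; rewrite (eq_big_seq _ wv); lra.
Qed.

End inverse_costs.

Section gaussian_arms.
Variables (R : realType) (K : nat) (mu sig : nat -> R).
Hypotheses (K_ge2 : (2 <= K)%N) (mu2_lt_mu1 : mu 2 < mu 1)
  (mu_nonincr : forall a, (2 <= a < K)%N -> mu a.+1 <= mu a)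
  (sig_gt0 : forall a, (1 <= a <= K)%N -> 0 < sig a).

Let sig1_gt0 : 0 < sig 1. Proof. by apply: sig_gt0; lia. Qed.

Let sig_arm_gt0 {a} : (2 <= a <= K)%N -> 0 < sig a.
Proof. by move=> a_arm; apply: sig_gt0; lia. Qed.

Lemma mu_le_mu2 {a} : (2 <= a <= K)%N -> mu a <= mu 2.
Proof.
case/andP=> a_ge2 a_leK.
have mu_homo := @homo_leq_in _ [pred i | (2 <= i <= K)%N] mu (fun x y : R => y <= x).
apply: (mu_homo _ _ _ _ 2%N a); rewrite ?inE ?a_ge2 ?a_leK //=.
- by move=> ? ? ? h1 h2; exact: le_trans h2 h1.
- by move=> i j; rewrite !inE => ? ? k ?; rewrite inE; lia.
- by move=> i; rewrite !inE => ? ?; apply: mu_nonincr; lia.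
Qed.

(* [Defs.ymax] writes [mu 2] with a ring numeral [1 *+ 2 : nat]; this restatement
   uses the plain [nat] numeral, so that [lra] and [nra] treat [mu 2] as one atom. *)
Lemma ymaxE : ymax mu sig = (mu 1 - mu 2) ^+ 2 / (2 * sig 1 ^+ 2).
Proof. by []. Qed.

Lemma ymax_gt0 : 0 < ymax mu sig.
Proof. by rewrite ymaxE divr_gt0 ?mulr_gt0 ?exprn_gt0 // subr_gt0. Qed.

Lemma mu_gap_psiE {a y} : (2 <= a <= K)%N -> y != 0 ->
  (mu 1 - mu a) ^+ 2 = 2 * y * (sig 1 ^+ 2 + sig a ^+ 2 * psi mu sig a y).
Proof.
by move=> /sig_arm_gt0 sa_gt0 y_neq0; rewrite /psi; field; rewrite y_neq0 gt_eqF.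
Qed.

Lemma sqr_gap_ge {a} : (2 <= a <= K)%N -> (mu 1 - mu 2) ^+ 2 <= (mu 1 - mu a) ^+ 2.
Proof.
move=> a_arm; have mu_a_le := mu_le_mu2 a_arm; have mu21 := mu2_lt_mu1.
by rewrite ler_pXn2r ?nnegrE //; lra.
Qed.

Lemma sqr_gap_gt0 {a} : (2 <= a <= K)%N -> 0 < (mu 1 - mu a) ^+ 2.
Proof. by move/sqr_gap_ge; apply: lt_le_trans; rewrite exprn_gt0 // subr_gt0. Qed.

Lemma psi_num_gt0 {a y} : (2 <= a <= K)%N -> y < ymax mu sig ->
  0 < (mu 1 - mu a) ^+ 2 - 2 * y * sig 1 ^+ 2.
Proof.
move=> a_arm; rewrite ymaxE ltr_pdivlMr ?mulr_gt0 ?exprn_gt0 // => y_lt.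
by have := sqr_gap_ge a_arm; rewrite subr_gt0; lra.
Qed.

Lemma psi_gt0 {a y} : (2 <= a <= K)%N -> 0 < y -> y < ymax mu sig -> 0 < psi mu sig a y.
Proof.
move=> a_arm y_gt0 y_lt.
by rewrite divr_gt0 ?psi_num_gt0 // !mulr_gt0 ?exprn_gt0 ?sig_arm_gt0.
Qed.

Lemma psi_decr {a x y} : (2 <= a <= K)%N -> 0 < x -> x < y -> psi mu sig a y < psi mu sig a x.
Proof.
move=> a_arm x_gt0 x_lt_y; have y_gt0 := lt_trans x_gt0 x_lt_y.
have gap_gt0 := sqr_gap_gt0 a_arm.
have gapEx := mu_gap_psiE a_arm (lt0r_neq0 x_gt0).
have gapEy := mu_gap_psiE a_arm (lt0r_neq0 y_gt0).
set py := psi mu sig a y in gapEy *; set px := psi mu sig a x in gapEx *.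
have cost_y_gt0 : 0 < sig 1 ^+ 2 + sig a ^+ 2 * py by nra.
rewrite -(ltr_pM2l (exprn_gt0 2 (sig_arm_gt0 a_arm))); nra.
Qed.

Lemma FfunE y :
  Ffun K mu sig y = \sum_(2 <= a < K.+1) sig 1 ^+ 2 / sig a ^+ 2 * (psi mu sig a y)^-1 ^+ 2.
Proof. by apply: eq_bigr => a _; rewrite invfM mulrA exprVn. Qed.

Lemma Ffun_incr {x y} : 0 < x -> x < y -> y < ymax mu sig -> Ffun K mu sig x < Ffun K mu sig y.
Proof.
move=> x_gt0 x_lt_y y_lt; rewrite !FfunE; apply: ltr_sum_nat; first lia.
move=> a a_range; have a_arm : (2 <= a <= K)%N by lia.
have psi_y_gt0 := psi_gt0 a_arm (lt_trans x_gt0 x_lt_y) y_lt.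
have psi_lt := psi_decr a_arm x_gt0 x_lt_y.
have psi_x_gt0 := lt_trans psi_y_gt0 psi_lt.
rewrite ltr_pM2l ?divr_gt0 ?exprn_gt0 ?(sig_arm_gt0 a_arm) //.
by rewrite ltr_pXn2r ?nnegrE ?invr_ge0 ?ltW // ltf_pV2.
Qed.

Lemma psi_cvg {a y0} : (2 <= a <= K)%N -> y0 != 0 ->
  psi mu sig a y @[y --> y0] --> psi mu sig a y0.
Proof.
move=> a_arm y0_neq0; apply: cvgM.
  by apply: cvgB; [exact: cvg_cst | apply: cvgMr_tmp; apply: cvgMl_tmp; exact: cvg_id].
apply: cvgV; last by apply: cvgMl_tmp; exact: cvg_id.
have sa_neq0 := lt0r_neq0 (sig_arm_gt0 a_arm).
by rewrite !mulf_neq0 ?pnatr_eq0.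
Qed.

Lemma psiV_cvg {a y0} : (2 <= a <= K)%N -> y0 < ymax mu sig ->
  (psi mu sig a y)^-1 @[y --> y0] --> (psi mu sig a y0)^-1.
Proof.
move=> a_arm y0_lt; rewrite invf_div; under eq_cvg do rewrite invf_div.
apply: cvgM; first by apply: cvgMl_tmp; exact: cvg_id.
apply: cvgV; first by rewrite lt0r_neq0 ?psi_num_gt0.
by apply: cvgB; [exact: cvg_cst | apply: cvgMr_tmp; apply: cvgMl_tmp; exact: cvg_id].
Qed.

Lemma Ffun_cvg {y0} : y0 < ymax mu sig -> Ffun K mu sig y @[y --> y0] --> Ffun K mu sig y0.
Proof.
move=> y0_lt; rewrite FfunE big_seq; under eq_cvg do rewrite FfunE big_seq.
apply: (cvg_big add_continuous) => a; rewrite mem_index_iota => a_range.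
have a_arm : (2 <= a <= K)%N by lia.
apply: cvgMl_tmp; apply: (continuous_cvg _ (@exprn_continuous R 2 _)).
exact: psiV_cvg.
Qed.

Lemma Ffun0 : Ffun K mu sig 0 = 0.
Proof. by rewrite FfunE big1 // => a _; rewrite /psi !(mulr0, invr0) expr0n mulr0. Qed.

Lemma Ffun_cvg0 : Ffun K mu sig y @[y --> 0^'+] --> 0.
Proof. by have := Ffun_cvg ymax_gt0; rewrite Ffun0; exact: cvg_at_right_filter. Qed.

Lemma psi2_ymax : psi mu sig 2 (ymax mu sig) = 0.
Proof.
rewrite /psi; have -> : (mu 1 - mu 2) ^+ 2 - 2 * ymax mu sig * sig 1 ^+ 2 = 0.
  by rewrite ymaxE; field; rewrite lt0r_neq0 ?exprn_gt0.
by rewrite mul0r.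
Qed.

Lemma Ffun_cvgy : Ffun K mu sig y @[y --> (ymax mu sig)^'-] --> +oo.
Proof.
have arm2 : (2 <= 2 <= K)%N by lia.
pose term2 y := sig 1 ^+ 2 / (sig 2 ^+ 2 * psi mu sig 2 y ^+ 2).
have term2_gt0 : \forall y \near (ymax mu sig)^'-, 0 < term2 y.
  near=> y; have psi2_gt0 : 0 < psi mu sig 2 y.
    apply: psi_gt0; [by [] | near: y; exact: nbhs_left_gt ymax_gt0 | near: y; exact: nbhs_left_lt].
  by rewrite divr_gt0 ?exprn_gt0 // mulr_gt0 ?exprn_gt0 ?(sig_arm_gt0 arm2).
have /(gtr0_cvgV0 term2_gt0) term2_cvgy : (term2 y)^-1 @[y --> (ymax mu sig)^'-] --> 0.
  have : sig 2 ^+ 2 * psi mu sig 2 y ^+ 2 / sig 1 ^+ 2 @[y --> ymax mu sig] -->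
         sig 2 ^+ 2 * psi mu sig 2 (ymax mu sig) ^+ 2 / sig 1 ^+ 2.
    apply: cvgMr_tmp; apply: cvgMl_tmp; apply: (continuous_cvg _ (@exprn_continuous R 2 _)).
    exact: psi_cvg (lt0r_neq0 ymax_gt0).
  rewrite psi2_ymax expr0n mulr0 mul0r => /cvg_at_left_filter.
  by under eq_cvg do rewrite -invf_div.
apply: ger_cvgy term2_cvgy; near=> y.
rewrite /term2 /Ffun big_ltn ?lerDl; last lia.
by apply: sumr_ge0 => a _; apply: divr_ge0; [exact: sqr_ge0 | apply: mulr_ge0; exact: sqr_ge0].
Unshelve. all: by end_near.
Qed.

Lemma Ffun_eq1_exists : exists2 ys, 0 < ys < ymax mu sig & Ffun K mu sig ys = 1.
Proof.
have near0 : \forall y \near 0^'+, [/\ 0 < y, y < ymax mu sig & Ffun K mu sig y < 1].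
  near=> y; split; near: y.
  - exact: nbhs_right_gt.
  - exact: nbhs_right_lt ymax_gt0.
  - exact: cvgr_lt Ffun_cvg0 _ ltr01.
have [x0 [x0_gt0 x0_lt F_x0]] := filter_ex near0.
have near_ymax : \forall y \near (ymax mu sig)^'-,
    [/\ x0 < y, y < ymax mu sig & 1 <= Ffun K mu sig y].
  near=> y; split; near: y.
  - exact: nbhs_left_gt x0_lt.
  - exact: nbhs_left_lt.
  - exact: (cvgryPge _).1 Ffun_cvgy 1.
have [x1 [x0_lt_x1 x1_lt F_x1]] := filter_ex near_ymax.
have [ys] : exists2 ys, ys \in `[x0, x1] & Ffun K mu sig ys = 1.
  apply: IVT; first exact: ltW.
    apply: continuous_in_subspaceT => y; rewrite inE /= in_itv /= => /andP[_ y_le].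
    exact: Ffun_cvg (le_lt_trans y_le x1_lt).
  by rewrite ge_min le_max (ltW F_x0) F_x1 orbT.
rewrite in_itv /= => /andP[x0_le x1_ge] F_ys; exists ys => //.
by rewrite (lt_le_trans x0_gt0 x0_le) (le_lt_trans x1_ge x1_lt).
Unshelve. all: by end_near.
Qed.

Lemma Ffun_eq1_unique : exists ys, (0 < ys < ymax mu sig) /\ Ffun K mu sig ys = 1 /\
  forall y, 0 < y < ymax mu sig -> Ffun K mu sig y = 1 -> y = ys.
Proof.
have [ys ys_range F_ys] := Ffun_eq1_exists; have /andP[ys_gt0 ys_lt] := ys_range.
exists ys; split=> //; split=> // y /andP[y_gt0 y_lt] F_y.
case: (ltgtP y ys) => // [y_lt_ys | ys_lt_y].
- by have := Ffun_incr y_gt0 y_lt_ys ys_lt; rewrite F_y F_ys ltxx.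
- by have := Ffun_incr ys_gt0 ys_lt_y y_lt; rewrite F_y F_ys ltxx.
Qed.

Lemma gobj_le_gterm {w a} : (2 <= a <= K)%N -> gobj K mu sig w <= gterm mu sig w a.
Proof. by move=> a_arm; apply: ge_bigmin_seq; rewrite // mem_index_iota; lia. Qed.

Section optimal_allocation.
Variable ys : R.
Hypotheses (ys_gt0 : 0 < ys) (ys_lt : ys < ymax mu sig) (F_ys : Ffun K mu sig ys = 1).

Let psi_ys_gt0 {a} : (2 <= a <= K)%N -> 0 < psi mu sig a ys.
Proof. by move=> a_arm; exact: psi_gt0. Qed.

Definition wden : R := 1 + \sum_(2 <= i < K.+1) (psi mu sig i ys)^-1.

Definition is_wstar (w : nat -> R) : Prop :=
  w 1 = 1 / wden /\ forall a, (2 <= a <= K)%N -> w a = (psi mu sig a ys)^-1 / wden.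

Definition wstar (a : nat) : R := (if a == 1%N then 1 else (psi mu sig a ys)^-1) / wden.

Lemma wden_gt0 : 0 < wden.
Proof.
rewrite ltr_wpDr // big_seq sumr_ge0 // => i; rewrite mem_index_iota => i_range.
by rewrite invr_ge0 ltW // psi_ys_gt0 //; lia.
Qed.

Lemma wstarP : is_wstar wstar.
Proof. by split=> [|a a_arm]; rewrite /wstar ?eqxx ?ifN_eqC //; lia. Qed.

Lemma wstar_mass : 1 / wden + \sum_(2 <= a < K.+1) (psi mu sig a ys)^-1 / wden = 1.
Proof. by rewrite -mulr_suml -mulrDl divff // lt0r_neq0 ?wden_gt0. Qed.

Lemma is_wstar_simplex {w} : is_wstar w -> in_simplex K w.
Proof.
case=> w1E waE; split=> [a a_range|].
  have [->|a_ne1] := eqVneq a 1%N; first by rewrite w1E divr_ge0 ?ler01 ?ltW ?wden_gt0.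
  by rewrite waE ?divr_ge0 ?invr_ge0 ?ltW ?wden_gt0 ?psi_ys_gt0 //; lia.
rewrite big_ltn; last lia.
rewrite -wstar_mass w1E; congr (_ + _); apply: eq_big_nat => a a_range; apply: waE; lia.
Qed.

Lemma costs_wstar a : (2 <= a <= K)%N ->
  sig 1 ^+ 2 / (1 / wden) + sig a ^+ 2 / ((psi mu sig a ys)^-1 / wden) =
  (mu 1 - mu a) ^+ 2 / (2 * (ys / wden)).
Proof.
move=> a_arm; rewrite (mu_gap_psiE a_arm (lt0r_neq0 ys_gt0)).
by field; rewrite !lt0r_neq0 ?wden_gt0 ?psi_ys_gt0.
Qed.

Lemma gterm_wstar w a : is_wstar w -> (2 <= a <= K)%N -> gterm mu sig w a = ys / wden.
Proof.
case=> w1E waE a_arm.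
have gap_neq0 : mu 1 - mu a != 0 by rewrite -sqrf_eq0 lt0r_neq0 ?sqr_gap_gt0.
have w_pos : (0 < w 1) && (0 < w a).
  by rewrite w1E waE // !divr_gt0 ?invr_gt0 ?ltr01 ?wden_gt0 ?psi_ys_gt0.
rewrite /gterm w_pos w1E waE // costs_wstar //.
by field; rewrite gap_neq0 !lt0r_neq0 ?wden_gt0.
Qed.

Lemma gobj_wstar {w} : is_wstar w -> gobj K mu sig w = ys / wden.
Proof.
move=> w_star; rewrite /gobj big_seq.
apply: (big_ind (fun v => v = ys / wden)).
- by apply: gterm_wstar => //; lia.
- by move=> x y -> ->; rewrite minxx.
- by move=> a; rewrite mem_index_iota => a_range; apply: gterm_wstar => //; lia.
Qed.

Lemma gterm_ge_costs w a : (2 <= a <= K)%N -> ys / wden <= gterm mu sig w a ->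
  [/\ 0 < w 1, 0 < w a & sig 1 ^+ 2 / w 1 + sig a ^+ 2 / w a <=
     sig 1 ^+ 2 / (1 / wden) + sig a ^+ 2 / ((psi mu sig a ys)^-1 / wden)].
Proof.
move=> a_arm; have c_gt0 : 0 < ys / wden by rewrite divr_gt0 ?wden_gt0.
rewrite costs_wstar // /gterm; case: ifP => [/andP[w1_gt0 wa_gt0] | _]; last first.
  by rewrite leNgt c_gt0.
have cost_gt0 : 0 < sig 1 ^+ 2 / w 1 + sig a ^+ 2 / w a.
  by have sa_gt0 := sig_arm_gt0 a_arm; apply: addr_gt0; apply: divr_gt0 => //; apply: exprn_gt0.
rewrite ler_pdivlMr ?mulr_gt0 // => c_le; split=> //.
rewrite ler_pdivlMr; last by rewrite mulr_gt0.
nra.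
Qed.

Lemma is_wstar_gterm_ge w : in_simplex K w ->
  (forall a, (2 <= a <= K)%N -> ys / wden <= gterm mu sig w a) -> is_wstar w.
Proof.
case=> _ w_sum gterm_ge.
have costs a : a \in index_iota 2 K.+1 -> [/\ 0 < w 1, 0 < w a &
    sig 1 ^+ 2 / w 1 + sig a ^+ 2 / w a <=
    sig 1 ^+ 2 / (1 / wden) + sig a ^+ 2 / ((psi mu sig a ys)^-1 / wden)].
  by rewrite mem_index_iota => a_range; apply: gterm_ge_costs; [|apply: gterm_ge]; lia.
have /costs[w1_gt0 _ _] : 2%N \in index_iota 2 K.+1 by rewrite mem_index_iota; lia.
have [w1E waE] : w 1 = 1 / wden /\
    {in index_iota 2 K.+1, w =1 fun a => (psi mu sig a ys)^-1 / wden}.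
  apply: (@inv_costs_le_eq _ _ _ (fun a => sig a ^+ 2) _ _ (sig 1 ^+ 2)).
  - exact: exprn_gt0.
  - exact: w1_gt0.
  - by rewrite divr_gt0 ?wden_gt0.
  - move=> a /[dup] /costs[_ wa_gt0 _]; rewrite mem_index_iota => a_range.
    by rewrite wa_gt0 exprn_gt0 ?divr_gt0 ?invr_gt0 ?wden_gt0 ?sig_arm_gt0 ?psi_ys_gt0 //; lia.
  - rewrite -[RHS]F_ys FfunE; apply: eq_big_seq => a; rewrite mem_index_iota => a_range.
    have [sa_gt0 psia_gt0] : 0 < sig a /\ 0 < psi mu sig a ys.
      by split; [apply: sig_arm_gt0 | apply: psi_ys_gt0]; lia.
    by field; rewrite !lt0r_neq0 ?wden_gt0.
  - by rewrite wstar_mass -w_sum [RHS]big_ltn //; lia.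
  - by move=> a /costs[].
split=> // a a_arm; apply: waE; rewrite mem_index_iota; lia.
Qed.

Lemma is_argmax_wstar w : is_argmax K mu sig w <-> is_wstar w.
Proof.
split=> [[w_simplex w_max] | w_star].
  apply: is_wstar_gterm_ge => // a a_arm; rewrite -(gobj_wstar wstarP).
  exact: le_trans (w_max _ (is_wstar_simplex wstarP)) (gobj_le_gterm a_arm).
split=> [|w' w'_simplex]; first exact: is_wstar_simplex.
rewrite (gobj_wstar w_star) leNgt; apply/negP => c_lt.
have w'_star : is_wstar w'.
  by apply: is_wstar_gterm_ge => // a a_arm; exact: ltW (lt_le_trans c_lt (gobj_le_gterm a_arm)).
by rewrite (gobj_wstar w'_star) ltxx in c_lt.
Qed.

End optimal_allocation.
End gaussian_arms.

Theorem lemma3 (R : realType) (K : nat) (mu sig : nat -> R)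
  (hK : (2 <= K)%N)
  (hmu12 : mu 2 < mu 1)
  (hmuord : forall a, (2 <= a < K)%N -> mu a.+1 <= mu a)
  (hsig : forall a, (1 <= a <= K)%N -> 0 < sig a) :
  (* F is strictly increasing on its domain (0, ymax) *)
  (forall x y, 0 < x -> x < y -> y < ymax mu sig ->
     Ffun K mu sig x < Ffun K mu sig y) /\
  (* lim_{y -> 0+} F y = 0 *)
  (Ffun K mu sig y @[y --> 0^'+] --> 0) /\
  (* lim_{y -> ymax-} F y = +oo *)
  (Ffun K mu sig y @[y --> (ymax mu sig)^'-] --> +oo) /\
  (* F y = 1 has exactly one solution in the domain *)
  (exists ys, (0 < ys < ymax mu sig) /\ Ffun K mu sig ys = 1 /\
     forall y, 0 < y < ymax mu sig -> Ffun K mu sig y = 1 -> y = ys) /\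
  (* w is a maximizer iff it is given by the closed-form expressions at y* *)
  (forall ys, 0 < ys < ymax mu sig -> Ffun K mu sig ys = 1 ->
   forall w : nat -> R,
     is_argmax K mu sig w <->
     (w 1 = 1 / (1 + \sum_(2 <= i < K.+1) (psi mu sig i ys)^-1) /\
      forall a, (2 <= a <= K)%N ->
        w a = (psi mu sig a ys)^-1 / (1 + \sum_(2 <= i < K.+1) (psi mu sig i ys)^-1))).
Proof.
split; first by move=> x y; exact: Ffun_incr.
split; first exact: Ffun_cvg0.
split; first exact: Ffun_cvgy.
split; first exact: Ffun_eq1_unique.
by move=> ys /andP[ys_gt0 ys_lt] F_ys w; exact: is_argmax_wstar.
Qed.
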